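(* Let $(\mathbf A,\tau)$ be a state-morphism algebra. For every congruence $\phi$ of the subalgebra $\tau(\mathbf A)$, the relation $\theta_\phi=\{(x,y)\in A\times A:(\tau(x),\tau(y))\in\phi\}$ is a congruence of $(\mathbf A,\tau)$ and $\theta_\phi\cap\tau(A)^2=\phi$. In addition, $\theta_\tau=\{(x,y)\in A\times A:\tau(x)=\tau(y)\}$ is a congruence of $(\mathbf A,\tau)$, $\phi\subseteq\theta_\phi$, and $\Theta_\tau(\phi)\subseteq\theta_\phi$.
   Context: Let $F$ be an arbitrary algebraic type. A state-morphism on an algebra $\mathbf A$ of type $F$ is an endomorphism $\tau:\mathbf A\to\mathbf A$ with $\tau\circ\tau=\tau$; the pair $(\mathbf A,\tau)$, viewed as an algebra of type $F$ extended by the unary operation $\tau$, is a state-morphism algebra. $\tau(A)=\{\tau(x):x\in A\}$ is the universe of a subalgebra $\tau(\mathbf A)$ of $\mathbf A$. $\mathrm{Con}(\mathbf A,\tau)$ denotes the congruences of $\mathbf A$ compatible with $\tau$. For $\phi\subseteq A^2$, $\Theta_\tau(\phi)$ denotes the congruence of $(\mathbf A,\tau)$ generated by $\phi$. *)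

From Stdlib Require Import FunctionalExtensionality.
From mathcomp Require Import all_boot.

Set Implicit Arguments.
Unset Strict Implicit.
Unset Printing Implicit Defensive.

Record alg_type := AlgType { op_sym : Type; arity : op_sym -> nat }.

Record algebra (F : alg_type) := Algebra {
  carrier :> Type;
  ops : forall o : op_sym F, ('I_(arity o) -> carrier) -> carrier }.
Arguments ops {F} a o _ : rename.

Definition endomorphism F (A : algebra F) (f : A -> A) : Prop :=
  forall (o : op_sym F) (args : 'I_(arity o) -> A), f (ops A o args) = ops A o (fun i => f (args i)).

Definition state_morphism F (A : algebra F) (tau : A -> A) : Prop :=
  endomorphism tau /\ (forall x, tau (tau x) = tau x).

Definition compatible F (A : algebra F) (R : A -> A -> Prop) : Prop :=
  forall (o : op_sym F) (a b : 'I_(arity o) -> A),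
    (forall i, R (a i) (b i)) -> R (ops A o a) (ops A o b).

Definition congruence F (A : algebra F) (R : A -> A -> Prop) : Prop :=
  [/\ (forall x, R x x), (forall x y, R x y -> R y x),
      (forall x y z, R x y -> R y z -> R x z) & compatible R].

Definition sm_congruence F (A : algebra F) (tau : A -> A) (R : A -> A -> Prop) : Prop :=
  congruence R /\ (forall x y, R x y -> R (tau x) (tau y)).

Definition Theta_tau F (A : algebra F) (tau : A -> A) (phi : A -> A -> Prop) : A -> A -> Prop :=
  fun x y => forall R, sm_congruence tau R -> (forall a b, phi a b -> R a b) -> R x y.

Definition op_closed F (A : algebra F) (P : A -> Prop) : Prop :=
  forall (o : op_sym F) (args : 'I_(arity o) -> A), (forall i, P (args i)) -> P (ops A o args).

Definition subalgebra F (A : algebra F) (P : A -> Prop) (HP : op_closed P) : algebra F :=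
  @Algebra F {x : A | P x}
    (fun o args => exist P (ops A o (fun i => proj1_sig (args i)))
                            (HP o _ (fun i => proj2_sig (args i)))).

Definition in_image F (A : algebra F) (tau : A -> A) (x : A) : Prop := exists y, x = tau y.

Lemma image_closed F (A : algebra F) (tau : A -> A) :
  state_morphism tau -> op_closed (in_image tau).
Proof.
move=> [Hend Hid] o args Hargs.
exists (ops A o args); rewrite Hend; congr (ops A o _).
apply: functional_extensionality => i.
have [y ->] := Hargs i; by rewrite Hid.
Qed.

Definition tau_subalg F (A : algebra F) (tau : A -> A) (H : state_morphism tau) : algebra F :=
  subalgebra (image_closed H).

Definition tau_corestr F (A : algebra F) (tau : A -> A) (x : A) : {y : A | in_image tau y} :=
  exist (in_image tau) (tau x) (ex_intro _ x erefl).

Definition theta_phi F (A : algebra F) (tau : A -> A)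
  (phi : {y : A | in_image tau y} -> {y : A | in_image tau y} -> Prop) : A -> A -> Prop :=
  fun x y => phi (tau_corestr tau x) (tau_corestr tau y).

Definition theta_tau F (A : algebra F) (tau : A -> A) : A -> A -> Prop :=
  fun x y => tau x = tau y.

(* phi as a relation on A (subset of tau(A)^2 contained in A^2) *)
Definition ext_rel F (A : algebra F) (tau : A -> A)
  (phi : {y : A | in_image tau y} -> {y : A | in_image tau y} -> Prop) : A -> A -> Prop :=
  fun x y => exists a b, proj1_sig a = x /\ proj1_sig b = y /\ phi a b.

(* Every relation in sight is the kernel-style pullback [(x, y) |-> R (f x) (f y)] of a
   congruence R along a homomorphism f with [f \o tau = f]: for theta_phi take f the
   corestriction [A -> tau(A)] of tau and R = phi, for theta_tau take f = tau and R
   equality. Such pullbacks are congruences of (A, tau). Since tau is the identity on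
   tau(A), the corestriction is a retraction onto tau(A), so theta_phi restricts to phi
   there; minimality of Theta_tau(phi) then gives Theta_tau(phi) <= theta_phi. *)

From mathcomp Require Import all_boot.
From Stdlib Require Import ProofIrrelevance FunctionalExtensionality.

Set Implicit Arguments.
Unset Strict Implicit.
Unset Printing Implicit Defensive.

Definition homomorphism F (A B : algebra F) (f : A -> B) : Prop :=
  forall (o : op_sym F) (args : 'I_(arity o) -> A),
    f (ops A o args) = ops B o (fun i => f (args i)).

Definition preimage_rel (T U : Type) (f : T -> U) (R : U -> U -> Prop) : T -> T -> Prop :=
  fun x y => R (f x) (f y).

Section Preimage.

Variables (F : alg_type) (A B : algebra F) (f : A -> B).
Hypothesis f_hom : homomorphism f.

Lemma congruence_preimage (R : B -> B -> Prop) :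
  congruence R -> congruence (preimage_rel f R).
Proof.
case=> Rrefl Rsym Rtrans Rcomp; split=> [x|x y|x y z|o a b ab].
- exact: Rrefl.
- exact: Rsym.
- exact: Rtrans.
- by rewrite /preimage_rel !f_hom; apply: Rcomp.
Qed.

Lemma sm_congruence_preimage (tau : A -> A) (R : B -> B -> Prop) :
  congruence R -> (forall x, f (tau x) = f x) ->
  sm_congruence tau (preimage_rel f R).
Proof.
move=> congR f_tau; split; first exact: congruence_preimage.
by move=> x y; rewrite /preimage_rel !f_tau.
Qed.

End Preimage.

Lemma congruence_eq F (B : algebra F) : congruence (@eq B).
Proof.
split=> [//|x y ->|x y z -> ->|o a b ab] //.
by congr (ops B o _); apply: functional_extensionality.
Qed.

Lemma Theta_tau_min F (A : algebra F) (tau : A -> A) (R S : A -> A -> Prop) :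
  sm_congruence tau S -> (forall x y, R x y -> S x y) ->
  forall x y, Theta_tau tau R x y -> S x y.
Proof. by move=> congS RS x y; apply. Qed.

Section Corestriction.

Variables (F : alg_type) (A : algebra F) (tau : A -> A).
Hypothesis tau_sm : state_morphism tau.

Lemma corestr_hom : @homomorphism F A (tau_subalg tau_sm) (tau_corestr tau).
Proof. by move=> o args; apply: subset_eq_compat; case: tau_sm. Qed.

Lemma corestr_idem (x : A) : tau_corestr tau (tau x) = tau_corestr tau x.
Proof. by apply: subset_eq_compat; case: tau_sm. Qed.

Lemma corestr_val (a : tau_subalg tau_sm) : tau_corestr tau (proj1_sig a) = a.
Proof.
case: a => x [y x_eq]; apply: subset_eq_compat => /=.
by rewrite x_eq; case: tau_sm => _; apply.
Qed.

End Corestriction.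

Theorem lemma3p2 (F : alg_type) (A : algebra F) (tau : A -> A)
  (Hsm : state_morphism tau)
  (phi : tau_subalg Hsm -> tau_subalg Hsm -> Prop)
  (Hphi : congruence phi) :
  [/\ sm_congruence tau (theta_phi phi),
      (forall a b : tau_subalg Hsm,
          theta_phi phi (proj1_sig a) (proj1_sig b) <-> phi a b),
      sm_congruence tau (theta_tau tau),
      (forall a b : tau_subalg Hsm, phi a b -> theta_phi phi (proj1_sig a) (proj1_sig b))
    & (forall x y : A, Theta_tau tau (ext_rel phi) x y -> theta_phi phi x y)].
Proof.
have theta_phi_cong : sm_congruence tau (theta_phi phi).
  exact: (sm_congruence_preimage (corestr_hom Hsm) Hphi (corestr_idem Hsm)).
have theta_phi_restr a b : theta_phi phi (proj1_sig a) (proj1_sig b) <-> phi a b.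
  by rewrite /theta_phi !corestr_val.
split=> // [|a b /theta_phi_restr //|].
- case: (Hsm) => tau_end tau_idem.
  exact: (sm_congruence_preimage tau_end (@congruence_eq F A) tau_idem).
- apply: Theta_tau_min theta_phi_cong _ => _ _ [a [b [<- [<- ab]]]].
  exact/theta_phi_restr.
Qed.
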